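(* For every $(\zeta_1,\zeta_2,\zeta_3)\in\mathbb{R}^3$ satisfying $0<\zeta_3<\zeta_2<\zeta_1$, there exists a unique choice of $(\zeta_1,\alpha,k)\in(0,\infty)\times(0,K(k))\times(0,1)$ in the transformation $$\zeta_1=\zeta_1,\qquad \zeta_2=\zeta_1\,\mathrm{dn}(2\alpha),\qquad \zeta_3=\zeta_1\,\mathrm{cn}(2\alpha),$$ (Jacobi functions of modulus $k$), which also implies $\nu:=\sqrt{\zeta_1^2-\zeta_3^2}=\zeta_1\,\mathrm{sn}(2\alpha)$. For $\zeta_1=1$, the bounded periodic profile $\phi$ (the solution of $\phi''-2\phi^3+c\phi=b$ with $b=4\zeta_1\zeta_2\zeta_3$, $c=2(\zeta_1^2+\zeta_2^2+\zeta_3^2)$ described in the context) can be uniquely expressed by $$\phi(x)=(\mathrm{dn}(2\alpha)+\mathrm{cn}(2\alpha))\frac{1+k^2\mathrm{sn}^2(\alpha)\,\mathrm{sn}^2(\mathrm{sn}(2\alpha)x)}{1-k^2\mathrm{sn}^2(\alpha)\,\mathrm{sn}^2(\mathrm{sn}(2\alpha)x)}-1,$$ where $\alpha\in(0,K)$ and $k\in(0,1)$ are two arbitrary parameters.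
   Context: $K(k)$ is the complete elliptic integral of the first kind and $\mathrm{sn},\mathrm{cn},\mathrm{dn}$ are Jacobi elliptic functions of modulus $k$. For $0<\zeta_3<\zeta_2<\zeta_1$, the profile $\phi$ referred to is the bounded periodic solution of $\phi''-2\phi^3+c\phi=b$, $(\phi')^2=\phi^4-c\phi^2+2b\phi+2d$, with $b=4\zeta_1\zeta_2\zeta_3$, $c=2(\zeta_1^2+\zeta_2^2+\zeta_3^2)$, $d=\tfrac12(\zeta_1^4+\zeta_2^4+\zeta_3^4)-\zeta_1^2\zeta_2^2-\zeta_1^2\zeta_3^2-\zeta_2^2\zeta_3^2$, given by $$\phi(x)=\frac{2(\zeta_1+\zeta_3)(\zeta_2+\zeta_3)}{(\zeta_1+\zeta_3)-(\zeta_1-\zeta_2)\mathrm{sn}^2(\nu x)}-\zeta_1-\zeta_2-\zeta_3,$$ with $\nu=\sqrt{\zeta_1^2-\zeta_3^2}$ and modulus $k=\sqrt{(\zeta_1^2-\zeta_2^2)/(\zeta_1^2-\zeta_3^2)}$, and $\alpha\in(0,K)$ defined by $\mathrm{sn}(\alpha)=\sqrt{(\zeta_1-\zeta_3)/(\zeta_1+\zeta_2)}$. *)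

From Stdlib Require Import Reals Lra ClassicalEpsilon.
From Coquelicot Require Import Coquelicot.
Open Scope R_scope.

Definition ellF (k phi : R) : R :=
  RInt (fun t => / sqrt (1 - k ^ 2 * (sin t) ^ 2)) 0 phi.

Definition ellK (k : R) : R := ellF k (PI / 2).

(* Jacobi amplitude: the inverse of phi |-> F(phi,k)
   (F(.,k) is a strictly increasing bijection of R for 0 <= k < 1). *)
Definition am (k u : R) : R :=
  epsilon (inhabits 0) (fun phi => ellF k phi = u).

Definition sn (k u : R) : R := sin (am k u).
Definition cn (k u : R) : R := cos (am k u).
Definition dn (k u : R) : R := sqrt (1 - k ^ 2 * (sn k u) ^ 2).

Definition prof_nu (z1 z3 : R) : R := sqrt (z1 ^ 2 - z3 ^ 2).
Definition prof_k (z1 z2 z3 : R) : R :=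
  sqrt ((z1 ^ 2 - z2 ^ 2) / (z1 ^ 2 - z3 ^ 2)).
Definition profile (z1 z2 z3 x : R) : R :=
  2 * (z1 + z3) * (z2 + z3)
    / ((z1 + z3) - (z1 - z2) * (sn (prof_k z1 z2 z3) (prof_nu z1 z3 * x)) ^ 2)
  - z1 - z2 - z3.

From Stdlib Require Import Reals Lra Psatz ClassicalEpsilon.
From Coquelicot Require Import Coquelicot.
Open Scope R_scope.

(* Write Δ(p) = √(1 - k² sin² p) and F = ellF k.  The Jacobi amplitude satisfies
   [am k (2 u) = amp_double k (am k u)] for [0 < u < K(k)]: [amp_double] has
   derivative [2 Δ(amp_double p) / Δ(p)], so [F(amp_double p) - 2 F(p)] is
   constant, hence zero.  This gives the duplication formulas for [cn] and [dn],
   in particular [1 - dn(2α) = k² sn²(α) (1 + cn(2α))], which turns the profile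
   into the stated form.  Conversely, [cn] and [dn] of [2α] determine [k] through
   [k² = (1 - dn²) / (1 - cn²)], and [2α] through [am(2α) = arccos(ζ3/ζ1)], as
   [am(2α)] lies in [(0, π)]. *)

(* [dn k u] is convertible to [delta k (am k u)]. *)
Definition delta (k p : R) : R := sqrt (1 - k ^ 2 * sin p ^ 2).

Definition amp_double (k p : R) : R := 2 * atan (sin p * delta k p / cos p).

Lemma sin_2atan t : sin (2 * atan t) = 2 * t / (1 + t ^ 2).
Proof.
  assert (h : 0 < 1 + t²) by (pose proof (Rle_0_sqr t); lra).
  pose proof (sqrt_lt_R0 _ h) as hq. pose proof (sqrt_sqrt _ (Rlt_le _ _ h)) as hqq.
  rewrite sin_2a, sin_atan, cos_atan, <- Rsqr_pow2.
  set (q := sqrt (1 + t²)) in *. rewrite <- hqq. field. lra.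
Qed.

Lemma cos_2atan t : cos (2 * atan t) = (1 - t ^ 2) / (1 + t ^ 2).
Proof.
  assert (h : 0 < 1 + t²) by (pose proof (Rle_0_sqr t); lra).
  pose proof (sqrt_lt_R0 _ h) as hq. pose proof (sqrt_sqrt _ (Rlt_le _ _ h)) as hqq.
  rewrite cos_2a_cos, cos_atan, <- !Rsqr_pow2.
  replace (1 - t²) with (2 - (1 + t²)) by ring.
  set (q := sqrt (1 + t²)) in *. rewrite <- hqq. field. lra.
Qed.

Lemma sn_sqr_add_cn_sqr k u : sn k u ^ 2 + cn k u ^ 2 = 1.
Proof. unfold sn, cn. rewrite <- !Rsqr_pow2. apply sin2_cos2. Qed.

Section Elliptic.

Variable k : R.
Hypothesis k2_lt_1 : k ^ 2 < 1.

Lemma delta_radicand_pos p : 0 < 1 - k ^ 2 * sin p ^ 2.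
Proof.
  pose proof (SIN_bound p). pose proof (pow2_ge_0 k).
  assert (sin p ^ 2 <= 1) by nra. nra.
Qed.

Lemma delta_pos p : 0 < delta k p.
Proof. apply sqrt_lt_R0, delta_radicand_pos. Qed.

Lemma delta_sqr p : delta k p ^ 2 = 1 - k ^ 2 * sin p ^ 2.
Proof. apply pow2_sqrt, Rlt_le, delta_radicand_pos. Qed.

Lemma delta_le_1 p : delta k p <= 1.
Proof.
  pose proof (delta_pos p). pose proof (delta_sqr p).
  assert (0 <= k ^ 2 * sin p ^ 2) by (apply Rmult_le_pos; apply pow2_ge_0).
  nra.
Qed.

Lemma continuous_inv_delta p : continuous (fun t => / delta k t) p.
Proof.
  apply (@ex_derive_continuous R_AbsRing R_NormedModule).
  pose proof (delta_radicand_pos p) as hr. pose proof (delta_pos p) as hd.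
  unfold delta in *. auto_derive.
  replace (1 + - (k * (k * 1) * (sin p * (sin p * 1)))) with (1 - k ^ 2 * sin p ^ 2) by ring.
  repeat split; lra.
Qed.

Lemma is_derive_ellF x : is_derive (ellF k) x (/ delta k x).
Proof.
  apply (is_derive_RInt (fun t => / delta k t) (ellF k) 0 x).
  - apply filter_forall. intros b. apply (@RInt_correct R_CompleteNormedModule).
    apply (@ex_RInt_continuous R_CompleteNormedModule).
    intros; apply continuous_inv_delta.
  - apply continuous_inv_delta.
Qed.

Lemma ellF_0 : ellF k 0 = 0.
Proof. apply (@RInt_point R_CompleteNormedModule). Qed.

Lemma ellF_lt x y : ellF k x < ellF k y <-> x < y.
Proof.
  assert (incr : forall x y, x < y -> ellF k x < ellF k y).
  { intros x' y' hxy. apply (incr_function (ellF k) m_infty p_infty (fun t => / delta k t));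
      simpl; auto.
    - intros; apply is_derive_ellF.
    - intros t _ _. apply Rinv_0_lt_compat, delta_pos. }
  split; [|apply incr].
  intros h. apply Rnot_le_lt. intros l.
  destruct (Rle_lt_or_eq_dec _ _ l) as [l'|<-]; [apply incr in l'|]; lra.
Qed.

Lemma ellF_inj x y : ellF k x = ellF k y -> x = y.
Proof.
  intros e. destruct (Rtotal_order x y) as [l|[l|l]]; auto;
    apply ellF_lt in l; lra.
Qed.

Lemma ellF_ge_id x : 0 <= x -> x <= ellF k x.
Proof.
  intros hx.
  assert (hle : RInt (fun _ => 1) 0 x <= ellF k x).
  { apply RInt_le; auto.
    - apply ex_RInt_const.
    - apply (@ex_RInt_continuous R_CompleteNormedModule).
      intros; apply continuous_inv_delta.
    - intros t _. pose proof (delta_pos t). pose proof (delta_le_1 t).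
      change (1 <= / delta k t). rewrite <- Rinv_1. apply Rinv_le_contravar; lra. }
  rewrite RInt_const in hle. unfold scal, mult in hle; simpl in hle.
  unfold mult in hle; simpl in hle. lra.
Qed.

Lemma ellF_am u : 0 <= u -> ellF k (am k u) = u.
Proof.
  intros hu. unfold am. apply epsilon_spec.
  assert (hF : continuity (ellF k)).
  { intros x. apply continuity_pt_filterlim.
    apply (@ex_derive_continuous R_AbsRing R_NormedModule).
    eexists; apply is_derive_ellF. }
  destruct (IVT_gen (ellF k) 0 u u hF) as [p [_ hp]].
  - rewrite ellF_0. pose proof (ellF_ge_id u hu).
    rewrite Rmin_left, Rmax_right; lra.
  - exists p; exact hp.
Qed.

Lemma am_ellF p : 0 <= p -> am k (ellF k p) = p.
Proof.
  intros hp. apply ellF_inj. apply ellF_am.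
  pose proof (ellF_ge_id p hp). lra.
Qed.

Lemma am_bounds u : 0 < u < ellK k -> 0 < am k u < PI / 2.
Proof.
  intros hu. rewrite <- (ellF_am u) in hu by lra.
  unfold ellK in hu. rewrite <- ellF_0 in hu.
  split; apply ellF_lt; tauto.
Qed.

Lemma double_denom_pos p : 0 < 1 - k ^ 2 * sin p ^ 4.
Proof.
  pose proof (delta_radicand_pos p). pose proof (pow2_ge_0 k).
  pose proof (SIN_bound p). assert (sin p ^ 2 <= 1) by nra. nra.
Qed.

Lemma double_denom_eq p :
  cos p ^ 2 + sin p ^ 2 * delta k p ^ 2 = 1 - k ^ 2 * sin p ^ 4.
Proof.
  rewrite delta_sqr. pose proof (sin2_cos2 p) as sc. unfold Rsqr in sc. nra.
Qed.

Lemma sin_amp_double p : cos p <> 0 ->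
  sin (amp_double k p) = 2 * sin p * cos p * delta k p / (1 - k ^ 2 * sin p ^ 4).
Proof.
  intros hc. pose proof (double_denom_pos p) as hD. rewrite <- double_denom_eq in *.
  unfold amp_double. rewrite sin_2atan. field. split; [lra|exact hc].
Qed.

Lemma cos_amp_double p : cos p <> 0 ->
  cos (amp_double k p)
  = (cos p ^ 2 - sin p ^ 2 * delta k p ^ 2) / (1 - k ^ 2 * sin p ^ 4).
Proof.
  intros hc. pose proof (double_denom_pos p) as hD. rewrite <- double_denom_eq in *.
  unfold amp_double. rewrite cos_2atan. field. split; [lra|exact hc].
Qed.

Lemma delta_amp_double p : cos p <> 0 ->
  delta k (amp_double k p)
  = (delta k p ^ 2 - k ^ 2 * sin p ^ 2 * cos p ^ 2) / (1 - k ^ 2 * sin p ^ 4).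
Proof.
  intros hc. pose proof (double_denom_pos p) as hD.
  pose proof (sin2_cos2 p) as sc. unfold Rsqr in sc.
  assert (hN : 0 < delta k p ^ 2 - k ^ 2 * sin p ^ 2 * cos p ^ 2).
  { rewrite delta_sqr. pose proof (pow2_ge_0 k). pose proof (SIN_bound p).
    assert (sin p ^ 2 * (1 + cos p ^ 2) <= 1) by nra.
    assert (0 <= sin p ^ 2 * (1 + cos p ^ 2)) by nra.
    nra. }
  unfold delta at 1. rewrite sin_amp_double by exact hc.
  rewrite <- (sqrt_pow2 ((delta k p ^ 2 - k ^ 2 * sin p ^ 2 * cos p ^ 2)
                         / (1 - k ^ 2 * sin p ^ 4)))
    by (apply Rlt_le, Rdiv_lt_0_compat; assumption).
  f_equal.
  replace ((2 * sin p * cos p * delta k p / (1 - k ^ 2 * sin p ^ 4)) ^ 2)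
    with (4 * sin p ^ 2 * cos p ^ 2 * delta k p ^ 2 / (1 - k ^ 2 * sin p ^ 4) ^ 2)
    by (field; lra).
  rewrite delta_sqr. replace (cos p ^ 2) with (1 - sin p ^ 2) by lra.
  field. lra.
Qed.

Lemma is_derive_amp_double p : cos p <> 0 ->
  is_derive (amp_double k) p (2 * delta k (amp_double k p) / delta k p).
Proof.
  intros hc. rewrite delta_amp_double by exact hc.
  pose proof (double_denom_pos p) as hD. pose proof (delta_pos p) as hd.
  pose proof (double_denom_eq p) as hDe. rewrite <- hDe in hD.
  pose proof (sin2_cos2 p) as sc. unfold Rsqr in sc.
  pose proof (delta_radicand_pos p) as hr.
  unfold amp_double, delta in *. auto_derive;
    replace (1 + - (k * (k * 1) * (sin p * (sin p * 1)))) with (1 - k ^ 2 * sin p ^ 2) by ring.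
  - repeat split; lra.
  - set (d := sqrt (1 - k ^ 2 * sin p ^ 2)) in *.
    set (s := sin p) in *. set (c := cos p) in *.
    rewrite <- hDe.
    replace (d ^ 2 - k ^ 2 * s ^ 2 * c ^ 2)
      with (d ^ 2 * (s * s + c * c) - k ^ 2 * s ^ 2 * c ^ 2) by (rewrite sc; ring).
    field. rewrite Rpow_mult_distr. repeat split; lra.
Qed.

Lemma amp_double_0 : amp_double k 0 = 0.
Proof.
  unfold amp_double. rewrite sin_0, cos_0, Rmult_0_l, Rdiv_0_l, atan_0. ring.
Qed.

Lemma ellF_amp_double p : - (PI / 2) < p < PI / 2 ->
  ellF k (amp_double k p) = 2 * ellF k p.
Proof.
  intros hp.
  set (g := fun y => ellF k (amp_double k y) - 2 * ellF k y).
  assert (dg : forall y, - (PI / 2) < y < PI / 2 -> is_derive g y 0).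
  { intros y hy. assert (hc : cos y <> 0) by (apply Rgt_not_eq, cos_gt_0; lra).
    evar (dgy : R). replace 0 with dgy.
    - apply (@is_derive_minus R_AbsRing R_NormedModule).
      + apply (is_derive_comp (ellF k) (amp_double k)).
        * apply is_derive_ellF.
        * apply is_derive_amp_double, hc.
      + apply is_derive_scal, is_derive_ellF.
    - unfold dgy, minus, plus, opp, scal, mult; simpl. unfold mult; simpl.
      pose proof (delta_pos y). pose proof (delta_pos (amp_double k y)).
      field. lra. }
  destruct (MVT_gen g 0 p (fun _ => 0)) as [c [_ hc]].
  - intros y hy. apply dg. unfold Rmin, Rmax in hy. destruct Rle_dec; lra.
  - intros y hy. apply continuity_pt_filterlim.
    apply (@ex_derive_continuous R_AbsRing R_NormedModule). eexists. apply dg.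
    unfold Rmin, Rmax in hy. destruct Rle_dec; lra.
  - unfold g in hc. rewrite amp_double_0, ellF_0 in hc. lra.
Qed.

Lemma amp_double_bounds p : 0 < p < PI / 2 -> 0 < amp_double k p < PI.
Proof.
  intros hp. unfold amp_double.
  assert (ht : 0 < sin p * delta k p / cos p).
  { apply Rdiv_lt_0_compat; [apply Rmult_lt_0_compat|];
      [apply sin_gt_0 | apply delta_pos | apply cos_gt_0]; lra. }
  pose proof (atan_increasing _ _ ht) as hpos. rewrite atan_0 in hpos.
  pose proof (atan_bound (sin p * delta k p / cos p)). lra.
Qed.

Lemma am_double u : 0 < u < ellK k -> am k (2 * u) = amp_double k (am k u).
Proof.
  intros hu. pose proof (am_bounds u hu) as hp.
  pose proof (amp_double_bounds _ hp) as hq.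
  rewrite <- (am_ellF (amp_double k (am k u))) by lra.
  rewrite ellF_amp_double, ellF_am by lra. reflexivity.
Qed.

Lemma am_double_bounds u : 0 < u < ellK k -> 0 < am k (2 * u) < PI.
Proof.
  intros hu. rewrite am_double by exact hu.
  apply amp_double_bounds, am_bounds, hu.
Qed.

Lemma dn_sqr u : dn k u ^ 2 = 1 - k ^ 2 * sn k u ^ 2.
Proof. exact (delta_sqr (am k u)). Qed.

Lemma sn_double_pos u : 0 < u < ellK k -> 0 < sn k (2 * u).
Proof. intros hu. apply sin_gt_0; apply am_double_bounds, hu. Qed.

Lemma cn_double u : 0 < u < ellK k ->
  cn k (2 * u) = (cn k u ^ 2 - sn k u ^ 2 * dn k u ^ 2) / (1 - k ^ 2 * sn k u ^ 4).
Proof.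
  intros hu. pose proof (am_bounds u hu) as hp.
  unfold cn at 1. rewrite am_double by exact hu.
  apply cos_amp_double, Rgt_not_eq, cos_gt_0; lra.
Qed.

Lemma dn_double u : 0 < u < ellK k ->
  dn k (2 * u) = (dn k u ^ 2 - k ^ 2 * sn k u ^ 2 * cn k u ^ 2) / (1 - k ^ 2 * sn k u ^ 4).
Proof.
  intros hu. pose proof (am_bounds u hu) as hp.
  change (dn k (2 * u)) with (delta k (am k (2 * u))). rewrite am_double by exact hu.
  apply delta_amp_double, Rgt_not_eq, cos_gt_0; lra.
Qed.

Lemma one_sub_dn_double u : 0 < u < ellK k ->
  1 - dn k (2 * u) = k ^ 2 * sn k u ^ 2 * (1 + cn k (2 * u)).
Proof.
  intros hu. rewrite cn_double, dn_double, dn_sqr by exact hu.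
  pose proof (double_denom_pos (am k u)) as hD. fold (sn k u) in hD.
  replace (cn k u ^ 2) with (1 - sn k u ^ 2) by (pose proof (sn_sqr_add_cn_sqr k u); lra).
  field. lra.
Qed.

End Elliptic.

Lemma prof_nu_transformation z1 z3 k u : 0 <= z1 -> 0 <= sn k u ->
  z3 = z1 * cn k u -> prof_nu z1 z3 = z1 * sn k u.
Proof.
  intros h1 hs ->. unfold prof_nu.
  replace (z1 ^ 2 - (z1 * cn k u) ^ 2) with ((z1 * sn k u) ^ 2)
    by (rewrite <- (Rmult_1_r (z1 ^ 2)), <- (sn_sqr_add_cn_sqr k u); ring).
  apply sqrt_pow2, Rmult_le_pos; assumption.
Qed.

Lemma prof_k_transformation z1 z2 z3 k u : 0 <= k < 1 -> z1 <> 0 -> sn k u <> 0 ->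
  z2 = z1 * dn k u -> z3 = z1 * cn k u -> prof_k z1 z2 z3 = k.
Proof.
  intros hk h1 hs -> ->. unfold prof_k.
  replace ((z1 ^ 2 - (z1 * dn k u) ^ 2) / (z1 ^ 2 - (z1 * cn k u) ^ 2)) with (k ^ 2).
  - apply sqrt_pow2; lra.
  - replace ((z1 * dn k u) ^ 2) with (z1 ^ 2 * dn k u ^ 2) by ring.
    replace ((z1 * cn k u) ^ 2) with (z1 ^ 2 * (1 - sn k u ^ 2))
      by (rewrite <- (sn_sqr_add_cn_sqr k u); ring).
    rewrite dn_sqr by nra.
    replace (z1 ^ 2 - z1 ^ 2 * (1 - sn k u ^ 2)) with ((z1 * sn k u) ^ 2) by ring.
    field. split; assumption.
Qed.

Lemma prof_k_bounds z1 z2 z3 : 0 <= z3 -> z3 < z2 -> z2 < z1 -> 0 < prof_k z1 z2 z3 < 1.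
Proof.
  intros h3 h32 h21. unfold prof_k.
  assert (hr : 0 < (z1 ^ 2 - z2 ^ 2) / (z1 ^ 2 - z3 ^ 2) < 1).
  { split.
    - apply Rdiv_lt_0_compat; nra.
    - apply (Rmult_lt_reg_r (z1 ^ 2 - z3 ^ 2)); [nra|]. field_simplify; nra. }
  split.
  - apply sqrt_lt_R0; lra.
  - rewrite <- sqrt_1. apply sqrt_lt_1; lra.
Qed.

Lemma profile_transformation z2 z3 a k x : 0 <= k < 1 -> 0 < a < ellK k ->
  z2 = dn k (2 * a) -> z3 = cn k (2 * a) ->
  profile 1 z2 z3 x =
  (dn k (2 * a) + cn k (2 * a)) *
    ((1 + k ^ 2 * (sn k a) ^ 2 * (sn k (sn k (2 * a) * x)) ^ 2) /
     (1 - k ^ 2 * (sn k a) ^ 2 * (sn k (sn k (2 * a) * x)) ^ 2)) - 1.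
Proof.
  intros hk ha e2 e3.
  assert (hk2 : k ^ 2 < 1) by nra.
  pose proof (sn_double_pos k hk2 a ha) as hs.
  pose proof (one_sub_dn_double k hk2 a ha) as hm.
  unfold profile.
  rewrite (prof_k_transformation 1 z2 z3 k (2 * a)) by lra.
  rewrite (prof_nu_transformation 1 z3 k (2 * a)) by lra.
  rewrite Rmult_1_l, <- e2, <- e3. rewrite <- e2, <- e3 in hm.
  pose proof (sn_sqr_add_cn_sqr k (sn k (2 * a) * x)) as hSC.
  pose proof (sn_sqr_add_cn_sqr k a) as hsc.
  pose proof (sn_sqr_add_cn_sqr k (2 * a)) as hsc2. rewrite <- e3 in hsc2.
  set (S := sn k (sn k (2 * a) * x)) in *.
  set (m := k ^ 2 * sn k a ^ 2) in *.
  assert (h3 : -1 < z3) by nra.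
  assert (hS : S ^ 2 <= 1) by nra.
  assert (hm1 : 0 <= m < 1).
  { pose proof (pow2_ge_0 (sn k a)). pose proof (pow2_ge_0 (cn k a)).
    unfold m. split; [apply Rmult_le_pos|]; nra. }
  assert (0 < 1 - m * S ^ 2) by nra.
  replace (1 - z2) with (m * (1 + z3)) by lra.
  field. split; nra.
Qed.

Lemma transformation_exists z1 z2 z3 : 0 < z3 -> z3 < z2 -> z2 < z1 ->
  let k := prof_k z1 z2 z3 in
  let a := ellF k (acos (z3 / z1)) / 2 in
  0 < k < 1 /\ 0 < a < ellK k /\ z2 = z1 * dn k (2 * a) /\ z3 = z1 * cn k (2 * a).
Proof.
  intros h3 h32 h21 k a.
  pose proof (prof_k_bounds z1 z2 z3 (Rlt_le _ _ h3) h32 h21) as hk. fold k in hk.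
  assert (hk2 : k ^ 2 < 1) by nra.
  assert (hc : 0 < z3 / z1 < 1).
  { split; [apply Rdiv_lt_0_compat|apply Rlt_div_l]; lra. }
  set (q := acos (z3 / z1)) in *.
  assert (hcq : cos q = z3 / z1) by (apply cos_acos; lra).
  assert (hq : 0 < q < PI / 2).
  { split; [apply acos_bound_lt; lra|].
    unfold q. rewrite acos_atan by lra. apply atan_bound. }
  assert (ham : am k (2 * a) = q).
  { unfold a. replace (2 * (ellF k q / 2)) with (ellF k q) by field.
    apply am_ellF; lra. }
  split; [exact hk|split; [|split]].
  - unfold a, ellK. pose proof (proj2 (ellF_lt k hk2 0 q) (proj1 hq)).
    pose proof (proj2 (ellF_lt k hk2 q (PI / 2)) (proj2 hq)).
    rewrite ellF_0 in *. lra.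
  - unfold dn, sn. rewrite ham.
    assert (ek : k ^ 2 = (z1 ^ 2 - z2 ^ 2) / (z1 ^ 2 - z3 ^ 2)).
    { apply pow2_sqrt, Rlt_le, Rdiv_lt_0_compat; nra. }
    assert (es : sin q ^ 2 = 1 - (z3 / z1) ^ 2).
    { rewrite <- hcq, <- !Rsqr_pow2, <- (sin2_cos2 q). ring. }
    replace (1 - k ^ 2 * sin q ^ 2) with ((z2 / z1) ^ 2)
      by (rewrite ek, es; field; split; nra).
    rewrite sqrt_pow2 by (apply Rlt_le, Rdiv_lt_0_compat; lra).
    field. lra.
  - unfold cn. rewrite ham, hcq. field. lra.
Qed.

Lemma transformation_unique z1 z2 z3 a k : 0 < z1 -> 0 <= k < 1 -> 0 < a < ellK k ->
  z2 = z1 * dn k (2 * a) -> z3 = z1 * cn k (2 * a) ->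
  k = prof_k z1 z2 z3 /\ a = ellF k (acos (z3 / z1)) / 2.
Proof.
  intros h1 hk ha e2 e3.
  assert (hk2 : k ^ 2 < 1) by nra.
  pose proof (sn_double_pos k hk2 a ha) as hs.
  split.
  - symmetry. apply (prof_k_transformation z1 z2 z3 k (2 * a)); lra.
  - replace (z3 / z1) with (cos (am k (2 * a))) by (rewrite e3; unfold cn; field; lra).
    rewrite acos_cos, ellF_am; try lra.
    pose proof (am_double_bounds k hk2 a ha). lra.
Qed.

Theorem corollary1 :
  (* (1) existence and uniqueness of (alpha, k) for each (z1,z2,z3) *)
  (forall z1 z2 z3 : R, 0 < z3 -> z3 < z2 -> z2 < z1 ->
     exists a k : R,
       (0 < k < 1 /\ 0 < a < ellK k /\
        z2 = z1 * dn k (2 * a) /\ z3 = z1 * cn k (2 * a)) /\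
       (forall a' k' : R,
          0 < k' < 1 -> 0 < a' < ellK k' ->
          z2 = z1 * dn k' (2 * a') -> z3 = z1 * cn k' (2 * a') ->
          a' = a /\ k' = k)) /\
  (* (2) the transformation implies nu = z1 sn(2 alpha) *)
  (forall z1 z2 z3 a k : R, 0 < z3 -> z3 < z2 -> z2 < z1 ->
     0 < k < 1 -> 0 < a < ellK k ->
     z2 = z1 * dn k (2 * a) -> z3 = z1 * cn k (2 * a) ->
     sqrt (z1 ^ 2 - z3 ^ 2) = z1 * sn k (2 * a)) /\
  (* (3) for z1 = 1, the profile of the context has the stated form in
     terms of the parameters (alpha, k) of the transformation *)
  (forall z2 z3 a k : R, 0 < z3 -> z3 < z2 -> z2 < 1 ->
     0 < k < 1 -> 0 < a < ellK k ->
     z2 = dn k (2 * a) -> z3 = cn k (2 * a) ->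
     forall x : R,
       profile 1 z2 z3 x =
       (dn k (2 * a) + cn k (2 * a)) *
         ((1 + k ^ 2 * (sn k a) ^ 2 * (sn k (sn k (2 * a) * x)) ^ 2) /
          (1 - k ^ 2 * (sn k a) ^ 2 * (sn k (sn k (2 * a) * x)) ^ 2)) - 1).
Proof.
  split; [|split].
  - intros z1 z2 z3 h3 h32 h21.
    exists (ellF (prof_k z1 z2 z3) (acos (z3 / z1)) / 2), (prof_k z1 z2 z3).
    split; [exact (transformation_exists z1 z2 z3 h3 h32 h21)|].
    intros a' k' hk' ha' e2 e3.
    destruct (transformation_unique z1 z2 z3 a' k') as [ek ea]; try lra.
    subst k'. split; [exact ea|reflexivity].
  - intros z1 z2 z3 a k h3 h32 h21 hk ha e2 e3.
    assert (hk2 : k ^ 2 < 1) by nra.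
    pose proof (sn_double_pos k hk2 a ha).
    apply (prof_nu_transformation z1 z3 k (2 * a)); lra.
  - intros z2 z3 a k h3 h32 h21 hk ha e2 e3 x.
    apply profile_transformation; lra.
Qed.
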